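(* Let $f:\mathbb{R}^n_{>0}\to\mathbb{R}^n_{>0}$ be order-preserving and homogeneous. If $\mathcal{G}(f)$ has a unique final class $C$ and $r(f^{[n]\setminus C}_0)<r(f)$, then the eigenspace $E(f)$ is nonempty and bounded in $(\mathbb{R}^n_{>0},d_H)$.
   Context: $[n]=\{1,\dots,n\}$; entrywise order. Order-preserving: $x\le y\Rightarrow f(x)\le f(y)$; homogeneous: $f(tx)=tf(x)$ for $t>0$. $d_H(x,y)=\log\max_{i,j}\frac{y_ix_j}{x_iy_j}$ on $\mathbb{R}^n_{>0}$; $E(f)$ is the set of $x\in\mathbb{R}^n_{>0}$ with $f(x)=\mu x$ for some $\mu$. $f$ extends continuously to an order-preserving homogeneous map on $\mathbb{R}^n_{\ge0}$, also denoted $f$. $P^J_0(x)_j=x_j$ for $j\in J$ and $0$ otherwise; $f^J_0=P^J_0fP^J_0$. For $g$ order-preserving homogeneous on $\mathbb{R}^n_{\ge 0}$, $r(g)=\inf_{x\in\mathbb{R}^n_{>0}}\max_i g(x)_i/x_i$ (and $r(f)$ is defined the same way). $\mathcal{G}(f)$ is the directed graph with vertices $[n]$ and an arc from $i$ to $j$ when $\lim_{t\to\infty}f(\exp(te_{\{j\}}))_i=\infty$, where $e_{\{j\}}$ is the $j$-th standard basis vector and $\exp$ is entrywise. A final class is a strongly connected component of $\mathcal{G}(f)$ with no arcs leaving it. *)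

From HB Require Import structures.
From mathcomp Require Import all_boot all_order all_algebra.
From mathcomp Require Import all_classical all_reals all_analysis.
Set Implicit Arguments. Unset Strict Implicit. Unset Printing Implicit Defensive.
Import Order.TTheory GRing.Theory Num.Theory.
Import numFieldNormedType.Exports.
Local Open Scope classical_set_scope.
Local Open Scope ring_scope.

Section Defs.
Variables (R : realType) (n : nat).
Notation vec := ('I_n -> R).

Definition posv (x : vec) : Prop := forall i, 0 < x i.

Definition order_preserving (f : vec -> vec) : Prop :=
  forall x y, posv x -> posv y -> (forall i, x i <= y i) -> forall i, f x i <= f y i.

Definition homogeneous (f : vec -> vec) : Prop :=
  forall (t : R) x, 0 < t -> posv x -> f (fun i => t * x i) = (fun i => t * f x i).

(* the continuous extension of f to the closed cone:
   fext f x = lim_{e -> 0+} f (x + e 1) = inf_{e > 0} f (x + e 1) (monotone in e) *)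
Definition fext (f : vec -> vec) (x : vec) : vec :=
  fun i => inf [set f (fun j => x j + e) i | e in [set e : R | 0 < e]].

Definition proj0 (J : {set 'I_n}) (x : vec) : vec :=
  fun j => if j \in J then x j else 0.

Definition fJ0 (f : vec -> vec) (J : {set 'I_n}) : vec -> vec :=
  fun x => proj0 J (fext f (proj0 J x)).

Definition cw_radius (g : vec -> vec) : R :=
  inf [set \big[Num.max/0]_(i < n) (g x i / x i) | x in posv].

Definition expvec (t : R) (j : 'I_n) : vec :=
  fun k => expR (if k == j then t else 0).

Definition arc (f : vec -> vec) (i j : 'I_n) : Prop :=
  (fun t : R => f (expvec t j) i) @ +oo --> +oo.

Definition graph_rel (f : vec -> vec) : rel 'I_n :=
  fun i j => `[< arc f i j >].

Definition scc (f : vec -> vec) (C : {set 'I_n}) : Prop :=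
  C != finset.set0 /\
  (forall i j, i \in C -> j \in C -> connect (graph_rel f) i j) /\
  (forall i j, i \in C ->
     connect (graph_rel f) i j -> connect (graph_rel f) j i -> j \in C).

Definition final_class (f : vec -> vec) (C : {set 'I_n}) : Prop :=
  scc f C /\ (forall i j, i \in C -> arc f i j -> j \in C).

Definition eigset (f : vec -> vec) : set vec :=
  [set x | posv x /\ exists mu : R, f x = (fun i => mu * x i)].

Definition hilbert_dist (x y : vec) : R :=
  ln (\big[Num.max/1]_(i < n) \big[Num.max/1]_(j < n) ((y i * x j) / (x i * y j))).

End Defs.

From Pilot Require Import Defs.
From HB Require Import structures.
From mathcomp Require Import all_boot all_order all_algebra.
From mathcomp Require Import all_classical all_reals all_analysis.
From mathcomp Require Import ring lra.
Import Order.TTheory GRing.Theory Num.Theory.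
Import numFieldNormedType.Exports.
Local Open Scope classical_set_scope.
Local Open Scope ring_scope.
Set Implicit Arguments. Unset Strict Implicit. Unset Printing Implicit Defensive.

(* Two estimates drive the proof.  First, if f(x) <= lam x, then every coordinate
   of x on the final class C is at most a constant times min x: an arc i -> j
   makes f(exp(t e_j))_i unbounded, so a large ratio x_j / min x would violate
   f(x)_i <= lam x_i, and every vertex of G(f) reaches C.  Second,
   r(f_0^{[n]\C}) < r(f) yields rho2 < r(f) such that, unless the coordinates on
   C dominate x, some coordinate k comparable to max x has f(x)_k < rho2 x_k.
   An eigenvector has eigenvalue r(f), so it admits no such k; hence E(f) has
   bounded Hilbert diameter.
   For existence, a Knaster-Tarski fixed point of
   y |-> (ln f(e^y) - ln r(f)) / (1 + kap) gives x with f(x) = r(f) x^(1+kap).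
   For these x a coordinate with f(x)_k < rho2 x_k is tiny compared with max x,
   so the estimates put them all in one box [1/K, K]^n, and as kap -> 0 they become approximate eigenvectors.
   Order-theoretic limits inside the box give a sub- and a super-eigenvector
   (the latter through the conjugate map x |-> 1/f(1/x)), and a last Tarski
   argument between them gives an eigenvector; f need not be continuous. *)

Section RealFacts.
Variable R : realType.

Lemma exists_forall_finite_large (I : finType) (P : I -> R -> Prop) :
  (forall i, exists B, forall B', B <= B' -> P i B') ->
  exists2 B, 0 < B & forall i, P i B.
Proof.
move=> H; have : \forall B \near +oo, 0 < B /\ forall i, P i B.
  near=> B; split; near: B; first by apply: nbhs_pinfty_gt; rewrite num_real.
  apply: filter_forall => i; have [B HB] := H i.
  by near=> B'; apply: HB; near: B'; apply: nbhs_pinfty_ge; rewrite num_real.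
by case/filter_ex => B [B0 HB]; exists B.
Unshelve. all: by end_near.
Qed.

Lemma exists_forall_finite_small (I : finType) (P : I -> R -> Prop) :
  (forall i, exists2 e, 0 < e & forall e', 0 < e' -> e' <= e -> P i e') ->
  exists2 e, 0 < e & forall i, P i e.
Proof.
move=> H; have : \forall e \near (0 : R)^'+, 0 < e /\ forall i, P i e.
  near=> e; split; near: e; first exact: nbhs_right_gt.
  apply: (filter_forall (F := (0 : R)^'+)) => i; have [e e0 He] := H i.
  near=> e'; apply: He; [near: e'; exact: nbhs_right_gt | near: e'; exact: nbhs_right_le].
by case/filter_ex => e [e0 He]; exists e.
Unshelve. all: by end_near.
Qed.

Lemma exists_small_mul_norm_le (a b : R) : 0 < b ->
  exists2 e, 0 < e & forall e', 0 < e' -> e' <= e -> e' * `|a| <= b.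
Proof.
move=> b0; exists (b / (`|a| + 1)) => [|e' _ le_e']; first by rewrite divr_gt0 // ltr_wpDl.
apply: le_trans (ler_wpM2r (normr_ge0 a) le_e') _.
by rewrite mulrAC ler_pdivrMr ?ltr_wpDl // ler_wpM2l ?lerDl // ltW.
Qed.

Lemma le_of_forall_gt1 (a b : R) :
  0 <= b -> (forall c, 1 < c -> a <= c * b) -> a <= b.
Proof.
move=> b0 H; apply/ler_addgt0Pr => e e0.
have [b_eq0|b_neq0] := eqVneq b 0.
  by apply: le_trans (H 2 (ltr1n _ 2)) _; rewrite b_eq0 mulr0 add0r ltW.
have {b0 b_neq0} b0 : 0 < b by rewrite lt_def b_neq0.
apply: le_trans (H (1 + e / b) _) _; first by rewrite ltrDl divr_gt0.
by rewrite mulrDl mul1r divfK ?gt_eqF.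
Qed.

Lemma knaster_tarski_box n (G : ('I_n -> R) -> ('I_n -> R)) (L U : 'I_n -> R) :
  (forall i, L i <= U i) ->
  (forall x y, (forall i, L i <= x i <= U i) -> (forall i, L i <= y i <= U i) ->
     (forall i, x i <= y i) -> forall i, G x i <= G y i) ->
  (forall i, L i <= G L i) -> (forall i, G U i <= U i) ->
  exists x, (forall i, L i <= x i <= U i) /\ G x = x.
Proof.
move=> LU Gm GL GU.
pose box x := forall i, L i <= x i <= U i.
have boxL : box L by move=> i; rewrite lexx LU.
have boxU : box U by move=> i; rewrite lexx LU.
pose S := [set x | box x /\ forall i, x i <= G x i].
pose z := fun i => sup [set x i | x in S].
have hs i : has_sup [set x i | x in S].
  split; first by exists (L i), L.
  by exists (U i) => _ [x [bx _] <-]; case/andP: (bx i).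
have zub x : S x -> forall i, x i <= z i.
  by move=> Sx i; apply: sup_upper_bound (hs i) _ _; exists x.
have zle v : (forall x, S x -> forall i, x i <= v i) -> forall i, z i <= v i.
  move=> H i; apply: ge_sup; first by exists (L i), L.
  by move=> _ [x Sx <-]; apply: H.
have bz : box z.
  move=> i; rewrite (zub L (conj boxL GL) i) /=.
  by apply: zle => x [bx _] j; case/andP: (bx j).
have bGx x : box x -> box (G x).
  move=> bx i; apply/andP; split.
    by apply: le_trans (GL i) _; apply: Gm => // j; case/andP: (bx j).
  by apply: le_trans _ (GU i); apply: Gm => // j; case/andP: (bx j).
have zG : forall i, z i <= G z i.
  by apply: zle => x [bx xG] i; apply: le_trans (xG i) _; apply: Gm => //; apply: zub.
have SGz : S (G z) by split; [apply: bGx | apply: Gm => //; apply: bGx].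
exists z; split => //; apply: funext => i; apply/eqP; rewrite eq_le zG andbT.
exact: zub SGz i.
Qed.

End RealFacts.

Section ConeMaps.
Variables (R : realType) (n : nat).
Notation vec := ('I_n -> R).

Lemma posvZ (c : R) (x : vec) : 0 < c -> posv x -> posv (fun i => c * x i).
Proof. by move=> c0 px i; rewrite mulr_gt0. Qed.

Lemma cw_radius_ge0 (g : vec -> vec) : 0 <= cw_radius g.
Proof.
apply: lb_le_inf.
  by exists (\big[Num.max/0]_(i < n) (g (fun=> 1) i / 1)), (fun=> 1) => // i.
by move=> _ [x _ <-]; rewrite bigmax_idl le_max lexx.
Qed.

Lemma cw_radius_le_max_ratio (g : vec -> vec) (x : vec) :
  posv x -> cw_radius g <= \big[Num.max/0]_(i < n) (g x i / x i).
Proof.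
move=> px; apply: ge_inf; last by exists x.
by exists 0 => _ [z _ <-]; rewrite bigmax_idl le_max lexx.
Qed.

Lemma hilbert_dist_le (K : R) (x y : vec) : 0 < K -> posv x -> posv y ->
  (forall i j, x i <= K * x j) -> (forall i j, y i <= K * y j) ->
  hilbert_dist x y <= ln (Num.max 1 (K * K)).
Proof.
move=> K0 px py Kx Ky; have mx1 : 1 <= Num.max 1 (K * K) by rewrite le_max lexx.
rewrite /hilbert_dist ler_ln ?posrE ?(lt_le_trans ltr01 mx1) //; last first.
  by apply: lt_le_trans ltr01 _; rewrite bigmax_idl le_max lexx.
apply: bigmax_le => // i _; apply: bigmax_le => // j _.
apply: le_trans (_ : K * K <= _); last by rewrite le_max lexx orbT.
rewrite ler_pdivrMr ?mulr_gt0 // (mulrC (x i)) mulrACA.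
by apply: ler_pM; [exact: ltW (py _) | exact: ltW (px _) | exact: Ky | exact: Kx].
Qed.

Section OrderPreservingHomogeneous.
Variable g : vec -> vec.
Hypothesis gpos : forall x, posv x -> posv (g x).
Hypothesis gop : order_preserving g.
Hypothesis ghom : homogeneous g.

Lemma le_map_scale (x y : vec) (c : R) : posv x -> posv y -> 0 < c ->
  (forall i, x i <= c * y i) -> forall i, g x i <= c * g y i.
Proof.
move=> px py c0 H i.
by have := gop px (posvZ c0 py) H i; rewrite (ghom c0 py).
Qed.

Lemma le_cw_radius (i0 : 'I_n) (c : R) (x : vec) :
  posv x -> (forall i, c * x i <= g x i) -> c <= cw_radius g.
Proof.
move=> px cx; apply: lb_le_inf; first by exists (\big[Num.max/0]_(i < n) (g x i / x i)), x.
move=> _ [z pz <-].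
case: (@arg_minP _ _ _ i0 predT (fun j => z j / x j) isT) => k _ kmin.
pose t := z k / x k; have t0 : 0 < t by rewrite divr_gt0.
have le_tz j : t * x j <= z j by rewrite -ler_pdivlMr // kmin.
apply: le_trans (le_bigmax _ _ k); rewrite ler_pdivlMr //.
apply: le_trans _ (gop (posvZ t0 px) pz le_tz k); rewrite (ghom t0 px).
by rewrite -[z k in leLHS](divfK (lt0r_neq0 (px k))) mulrCA ler_wpM2l ?(ltW t0).
Qed.

Lemma exists_eigvec_between (lam : R) (X Y : vec) : 0 < lam -> posv X ->
  (forall i, X i <= Y i) -> (forall i, lam * X i <= g X i) ->
  (forall i, g Y i <= lam * Y i) ->
  exists z, posv z /\ g z = (fun i => lam * z i).
Proof.
move=> lam0 pX XY Xsub Ysup.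
pose G (x : vec) : vec := fun i => g x i / lam.
have [z [zb Gz]] : exists z, (forall i, X i <= z i <= Y i) /\ G z = z.
  apply: knaster_tarski_box => // [u v ub vb uv i||i].
  - rewrite /G ler_pM2r ?invr_gt0 //; apply: gop => // j.
      by apply: lt_le_trans (pX j) _; case/andP: (ub j).
    by apply: lt_le_trans (pX j) _; case/andP: (vb j).
  - by move=> i; rewrite /G ler_pdivlMr // mulrC.
  - by rewrite /G ler_pdivrMr // mulrC.
have pz : posv z by move=> i; apply: lt_le_trans (pX i) _; case/andP: (zb i).
exists z; split => //; apply: funext => i.
by rewrite -[in RHS]Gz /G mulrC divfK ?gt_eqF.
Qed.

Lemma exists_twisted_eigvec (lam kap c0 : R) : 0 < lam -> 0 < kap -> 0 <= c0 ->
  (forall i, `|ln (g (fun=> 1) i) - ln lam| <= c0) ->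
  exists x, [/\ posv x, forall i, g x i = lam * x i * expR (kap * ln (x i)) &
                  forall i, `|kap * ln (x i)| <= c0].
Proof.
move=> lam0 kap0 c00 c0g.
pose E (y : vec) : vec := fun i => expR (y i).
have pE y : posv (E y) by move=> i; exact: expR_gt0.
have kap1 : 0 < 1 + kap by rewrite addr_gt0.
pose G (y : vec) : vec := fun i => (ln (g (E y) i) - ln lam) / (1 + kap).
pose B := c0 / kap.
have B0 : 0 <= B := divr_ge0 c00 (ltW kap0).
have lnEc c i : ln (g (E (fun=> c)) i) = c + ln (g (fun=> 1) i).
  have -> : E (fun=> c) = (fun i => expR c * (fun=> 1) i) by apply: funext => j; rewrite mulr1.
  by rewrite (ghom (expR_gt0 c) (fun=> ltr01)) lnM ?posrE ?expR_gt0 ?gpos // expRK.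
(* G(c)_i = (c + ln g(1)_i - ln lam) / (1 + kap) for constant c, so G maps the
   constant vectors -B and B into the cube [-B, B]^n. *)
have [y [yb Gy]] : exists y, (forall i, - B <= y i <= B) /\ G y = y.
  apply: (knaster_tarski_box (L := fun=> - B) (U := fun=> B)).
  - by move=> i; lra.
  - move=> u v _ _ uv i; rewrite /G ler_pM2r ?invr_gt0 // lerD2r.
    by rewrite ler_ln ?posrE ?gpos //; apply: gop => // j; rewrite ler_expR.
  - move=> i; rewrite /G lnEc ler_pdivlMr // -addrA.
    have := c0g i; rewrite ler_norml => /andP [lo _].
    by rewrite mulrDr mulr1 mulNr lerD2l /B divfK ?gt_eqF.
  - move=> i; rewrite /G lnEc ler_pdivrMr // -addrA.
    have := c0g i; rewrite ler_norml => /andP [_ hi].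
    by rewrite mulrDr mulr1 lerD2l /B divfK ?gt_eqF.
have lnE i : ln (E y i) = y i := expRK _.
exists (E y); split => // i; rewrite lnE.
  have e : ln (g (E y) i) = ln lam + y i + kap * y i.
    by rewrite -[y i in RHS](congr1 (fun h => h i) Gy) /G; field; rewrite gt_eqF.
  by rewrite -[LHS]lnK ?posrE ?gpos // e !expRD lnK ?posrE.
have := yb i; rewrite -ler_norml => yB.
by rewrite normrM gtr0_norm // -ler_pdivlMl // mulrC.
Qed.

End OrderPreservingHomogeneous.
End ConeMaps.

Section SubeigenvectorLimit.
Variables (R : realType) (n : nat).
Notation vec := ('I_n -> R).
Variable g : vec -> vec.
Hypothesis gpos : forall x, posv x -> posv (g x).
Hypothesis gop : order_preserving g.
Hypothesis ghom : homogeneous g.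
Variables (lam K : R).
Hypothesis lam0 : 0 < lam.
Hypothesis K0 : 0 < K.

Definition in_box (x : vec) := forall i, K^-1 <= x i <= K.

Lemma in_box_posv x : in_box x -> posv x.
Proof.
move=> bx i; apply: lt_le_trans (_ : 0 < K^-1) _; first by rewrite invr_gt0.
by case/andP: (bx i).
Qed.

Hypothesis approx_subeig : forall b, 1 < b ->
  exists2 x, in_box x & forall i, lam / b * x i <= g x i.

Definition subeig_box b := [set x | in_box x /\ forall i, lam / b * x i <= g x i].

Definition sup_subeig b : vec := fun i => sup [set x i | x in subeig_box b].

Definition lim_subeig : vec := fun i => inf [set sup_subeig b i | b in [set b | 1 < b]].

Lemma sup_subeig_ub b x i : subeig_box b x -> x i <= sup_subeig b i.
Proof.
move=> Sx; apply: sup_upper_bound; last by exists x.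
split; first by exists (x i), x.
by exists K => _ [z [bz _] <-]; case/andP: (bz i).
Qed.

Lemma sup_subeig_le b c i : 1 < b ->
  (forall x, subeig_box b x -> x i <= c) -> sup_subeig b i <= c.
Proof.
move=> b1 H; apply: ge_sup => [|_ [x Sx <-]]; last exact: H.
by have [x bx xsub] := approx_subeig b1; exists (x i), x.
Qed.

Lemma sup_subeigP b : 1 < b -> subeig_box b (sup_subeig b).
Proof.
move=> b1; have b0 : 0 < b := lt_trans ltr01 b1.
have [x bx xsub] := approx_subeig b1.
have bX : in_box (sup_subeig b).
  move=> i; apply/andP; split.
    by apply: le_trans (sup_subeig_ub i (conj bx xsub)); case/andP: (bx i).
  by apply: sup_subeig_le => // z [bz _]; case/andP: (bz i).
split=> // i; rewrite mulrC -ler_pdivlMr ?divr_gt0 //.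
apply: sup_subeig_le => // z [bz zsub]; rewrite ler_pdivlMr ?divr_gt0 // mulrC.
apply: le_trans (zsub i) _; apply: gop; [exact: in_box_posv bz | exact: in_box_posv bX |].
by move=> j; exact: sup_subeig_ub (conj bz zsub).
Qed.

Lemma sup_subeig_mono b b' i : 1 < b -> b <= b' -> sup_subeig b i <= sup_subeig b' i.
Proof.
move=> b1 bb'; have b0 : 0 < b := lt_trans ltr01 b1.
apply: sup_subeig_le => // x [bx xsub]; apply: sup_subeig_ub; split=> // j.
apply: le_trans (xsub j); rewrite ler_wpM2r ?(ltW (in_box_posv bx j)) //.
by rewrite ler_pM2l // lef_pV2 ?posrE // (lt_le_trans b0).
Qed.

Lemma lim_subeig_le b i : 1 < b -> lim_subeig i <= sup_subeig b i.
Proof.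
move=> b1; apply: ge_inf; last by exists b.
by exists K^-1 => _ [b' b1' <-]; case/andP: (proj1 (sup_subeigP b1') i).
Qed.

Lemma in_box_lim_subeig : in_box lim_subeig.
Proof.
have b1 : (1 : R) < 2 by rewrite ltr1n.
move=> i; apply/andP; split; last first.
  by apply: le_trans (lim_subeig_le i b1) _; case/andP: (proj1 (sup_subeigP b1) i).
apply: lb_le_inf; first by exists (sup_subeig 2 i), 2.
by move=> _ [b b1' <-]; case/andP: (proj1 (sup_subeigP b1') i).
Qed.

Lemma sup_subeig_near_lim s : 1 < s ->
  exists2 b, 1 < b & b <= s /\ forall j, sup_subeig b j <= s * lim_subeig j.
Proof.
move=> s1; have [d d0 Hd] : exists2 d, 0 < d &
    forall j, sup_subeig (1 + d) j <= s * lim_subeig j.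
  apply: exists_forall_finite_small => j.
  have : lim_subeig j < s * lim_subeig j by rewrite ltr_pMl ?(in_box_posv in_box_lim_subeig).
  case/inf_lt => [|_ [b b1 <-] lt]; first by exists (sup_subeig 2 j), 2; rewrite //= ltr1n.
  exists (b - 1) => [|e e0 le]; first by rewrite subr_gt0.
  apply: le_trans (ltW lt); apply: sup_subeig_mono; first by rewrite ltrDl.
  by rewrite -lerBrDl.
have m0 : 0 < Num.min d (s - 1) by rewrite lt_min d0 subr_gt0.
exists (1 + Num.min d (s - 1)); first by rewrite ltrDl.
split=> [|j]; first by rewrite -lerBrDl ge_min lexx orbT.
apply: le_trans (Hd j); apply: sup_subeig_mono; first by rewrite ltrDl.
by rewrite lerD2l ge_min lexx.
Qed.

Lemma exists_subeig_in_box : exists2 X, in_box X & forall i, lam * X i <= g X i.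
Proof.
have pX := in_box_posv in_box_lim_subeig.
exists lim_subeig => [|i]; first exact: in_box_lim_subeig.
apply: le_of_forall_gt1 => [|c c1]; first exact: ltW (gpos pX i).
pose s := Num.sqrt c; have s1 : 1 < s by rewrite -sqrtr1 ltr_sqrt // (lt_trans ltr01).
have s0 : 0 < s := lt_trans ltr01 s1.
have [b b1 [bs Xb_le]] := sup_subeig_near_lim s1.
have [bXb Xb_sub] := sup_subeigP b1; have pXb := in_box_posv bXb.
have lam_Xb : lam * sup_subeig b i <= b * g (sup_subeig b) i.
  by have := Xb_sub i; rewrite mulrAC ler_pdivrMr ?(lt_trans ltr01 b1) // [_ * b]mulrC.
have g_Xb : g (sup_subeig b) i <= s * g lim_subeig i.
  exact: (le_map_scale gop ghom pXb pX s0 Xb_le i).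
apply: le_trans (ler_wpM2l (ltW lam0) (lim_subeig_le i b1)) _; apply: le_trans lam_Xb _.
rewrite -[c](sqr_sqrtr (ltW (lt_trans ltr01 c1))) expr2 -/s -mulrA.
by apply: ler_pM => //; [exact: ltW (lt_trans ltr01 b1) | exact: ltW (gpos pXb i)].
Qed.

End SubeigenvectorLimit.

Lemma ln_le_of_in_box (R : realType) n (K : R) (x : 'I_n -> R) i :
  0 < K -> in_box K x -> `|ln (x i)| <= `|ln K|.
Proof.
move=> K0 bx; have xi0 := in_box_posv K0 bx i; case/andP: (bx i) => lo hi.
apply: le_trans (ler_norm _); rewrite ler_norml; apply/andP; split.
  by rewrite -lnV ?posrE // ler_ln ?posrE ?invr_gt0.
by rewrite ler_ln ?posrE.
Qed.

Lemma expR_scaled_ln_in_box (R : realType) n (K kap beta : R) (x : 'I_n -> R) i :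
  0 < K -> 0 < beta -> in_box K x -> 0 <= kap -> kap * `|ln K| <= ln beta ->
  beta^-1 <= expR (kap * ln (x i)) <= beta.
Proof.
move=> K0 b0 bx kap0 kapK.
have : `|kap * ln (x i)| <= ln beta.
  by rewrite normrM ger0_norm //; apply: le_trans kapK; rewrite ler_wpM2l ?ln_le_of_in_box.
rewrite ler_norml => /andP [lo hi]; apply/andP; split.
  by rewrite -[beta in beta^-1]lnK ?posrE // -expRN ler_expR.
by rewrite -[beta in _ <= beta]lnK ?posrE // ler_expR.
Qed.

Section ConjugateMap.
Variables (R : realType) (n : nat).
Notation vec := ('I_n -> R).

Definition inv_vec (x : vec) : vec := fun i => (x i)^-1.

Definition conj_map (g : vec -> vec) : vec -> vec := fun x => inv_vec (g (inv_vec x)).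

Lemma posv_inv_vec x : posv x -> posv (inv_vec x).
Proof. by move=> px i; rewrite invr_gt0. Qed.

Lemma inv_vecK : involutive inv_vec.
Proof. by move=> x; apply: funext => i; rewrite /inv_vec invrK. Qed.

Lemma in_box_inv_vec (K : R) x : 0 < K -> in_box K x -> in_box K (inv_vec x).
Proof.
move=> K0 bx i; have xi0 := in_box_posv K0 bx i; case/andP: (bx i) => lo hi.
apply/andP; split; first by rewrite /inv_vec lef_pV2 ?posrE.
by rewrite /inv_vec -[K in _ <= K]invrK lef_pV2 ?posrE ?invr_gt0.
Qed.

Variable g : vec -> vec.
Hypothesis gpos : forall x, posv x -> posv (g x).
Hypothesis gop : order_preserving g.
Hypothesis ghom : homogeneous g.

Lemma conj_map_pos x : posv x -> posv (conj_map g x).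
Proof. by move=> px; apply/posv_inv_vec/gpos/posv_inv_vec. Qed.

Lemma conj_map_order_preserving : order_preserving (conj_map g).
Proof.
move=> x y px py xy i; have [px' py'] := (posv_inv_vec px, posv_inv_vec py).
rewrite lef_pV2 ?posrE ?gpos //; apply: gop => // j.
by rewrite lef_pV2 ?posrE.
Qed.

Lemma conj_map_homogeneous : homogeneous (conj_map g).
Proof.
move=> t x t0 px; have px' := posv_inv_vec px; rewrite /conj_map.
have -> : inv_vec (fun i => t * x i) = (fun i => t^-1 * inv_vec x i).
  by apply: funext => i; rewrite /inv_vec invfM.
by apply: funext => i; rewrite ghom ?invr_gt0 // /inv_vec invfM invrK.
Qed.

Lemma exists_supereig_in_box (lam K : R) : 0 < lam -> 0 < K ->
  (forall b, 1 < b -> exists2 x, in_box K x & forall i, g x i <= lam * b * x i) ->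
  exists2 Y, in_box K Y & forall i, g Y i <= lam * Y i.
Proof.
move=> lam0 K0 approx_supeig; have lamV0 : 0 < lam^-1 by rewrite invr_gt0.
have [|Z bZ Zsub] := exists_subeig_in_box conj_map_pos conj_map_order_preserving
  conj_map_homogeneous lamV0 K0.
  move=> b b1; have [x bx xsup] := approx_supeig b b1.
  exists (inv_vec x); first exact: in_box_inv_vec.
  move=> i; have px := in_box_posv K0 bx.
  rewrite /conj_map inv_vecK /inv_vec -!invfM lef_pV2 ?posrE ?xsup ?(gpos px i) //.
  by rewrite !mulr_gt0 // (lt_trans ltr01 b1).
have pZ := in_box_posv K0 bZ.
exists (inv_vec Z); first exact: in_box_inv_vec.
move=> i; have gY0 := gpos (posv_inv_vec pZ) i.
by rewrite -[g _ i]invrK -[lam]invrK /inv_vec -invfM lef_pV2 ?posrE ?invr_gt0 ?mulr_gt0 ?Zsub.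
Qed.

End ConjugateMap.

Section FinalClassBound.
Variables (R : realType) (n : nat) (f : ('I_n -> R) -> ('I_n -> R)).
Notation vec := ('I_n -> R).
Hypothesis fop : order_preserving f.
Hypothesis fhom : homogeneous f.

Definition ratio_bound (lam : R) (a j : 'I_n) (B : R) := forall x : vec, posv x ->
  (forall k, x a <= x k) -> (forall i, f x i <= lam * x i) -> x j <= B * x a.

Lemma ratio_bound_le lam a j B B' : B <= B' -> ratio_bound lam a j B -> ratio_bound lam a j B'.
Proof.
move=> BB' HB x px amin fle; apply: le_trans (HB x px amin fle) _.
by rewrite ler_wpM2r // ltW.
Qed.

(* If x_j > e^M x_a, then x >= x_a exp(t e_j) with t > M, and the arc i -> j forces
   f(x)_i > lam B x_a >= lam x_i. *)
Lemma arc_ratio_bound lam a i j B : 0 <= lam -> Defs.arc f i j ->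
  ratio_bound lam a i B -> exists B', ratio_bound lam a j B'.
Proof.
move=> lam0 /cvgryPgt /(_ (lam * B)) [M [_ HM]] bound_i.
exists (expR M) => x px amin fle; rewrite leNgt; apply/negP => x_j_big.
have xa0 := px a; pose t := ln (x j / x a).
have Mt : M < t by rewrite /t -ltr_expR lnK ?posrE ?divr_gt0 // ltr_pdivlMr.
have pe : posv (expvec t j) by move=> k; exact: expR_gt0.
have le_x k : x a * expvec t j k <= x k.
  rewrite /expvec; case: eqP => [->|_]; last by rewrite expR0 mulr1.
  by rewrite /t lnK ?posrE ?divr_gt0 // mulrC divfK ?gt_eqF.
have := fop (posvZ xa0 pe) px le_x i; rewrite (fhom xa0 pe) => fe_le.
have : x a * (lam * B) < x a * f (expvec t j) i by rewrite ltr_pM2l // HM.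
rewrite ltNge => /negP; apply; apply: le_trans fe_le _; apply: le_trans (fle i) _.
by rewrite mulrCA ler_wpM2l // mulrC bound_i.
Qed.

Lemma connect_ratio_bound lam a j : 0 <= lam -> connect (graph_rel f) a j ->
  exists B, ratio_bound lam a j B.
Proof.
move=> lam0; have along_path p b : path (graph_rel f) b p ->
    (exists B, ratio_bound lam a b B) -> exists B, ratio_bound lam a (last b p) B.
  elim: p b => [//|c p IH] b /= /andP [/asboolP bc pc] [B HB].
  by apply: IH pc _; exact: arc_ratio_bound lam0 bc HB.
case/connectP=> p path_ap ->; apply: along_path path_ap _.
by exists 1 => x _ _ _; rewrite mul1r.
Qed.

(* Among the vertices reachable from a, one that reaches the fewest vertices
   reaches exactly a final class. *)
Lemma exists_reachable_final_class a :
  exists2 D, final_class f D & exists2 c, c \in D & connect (graph_rel f) a c.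
Proof.
pose reach b := finset (connect (graph_rel f) b).
have reachE b k : (k \in reach b) = connect (graph_rel f) b k by rewrite /reach finset.in_set.
have a_reach : a \in reach a by rewrite reachE connect0.
case: (@arg_minnP _ a (fun b => b \in reach a) (fun b => #|reach b|) a_reach) => b ab bmin.
have reach_sub i : i \in reach b -> reach i \subset reach b.
  rewrite reachE => bi; apply/fintype.subsetP => k; rewrite !reachE; exact: connect_trans bi.
have reach_eq i : i \in reach b -> reach i = reach b.
  move=> ib; apply/eqP; rewrite eqEcard reach_sub //= bmin //.
  by move: ab ib; rewrite !reachE; exact: connect_trans.
exists (reach b); last by exists b; rewrite ?reachE ?connect0 //; move: ab; rewrite reachE.
split; first split.
- by apply/set0Pn; exists b; rewrite reachE connect0.
- split=> [i j ib jb | i j ib ij _]; first by rewrite -(reach_eq i ib) reachE in jb.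
  by move: ib; rewrite !reachE => bi; exact: connect_trans bi ij.
- move=> i j ib ij; move: ib; rewrite !reachE => bi; apply: connect_trans bi _.
  by apply: connect1; apply/asboolP.
Qed.

Lemma final_class_ratio_bound (C : {set 'I_n}) lam : final_class f C ->
  (forall D, final_class f D -> D = C) -> 0 <= lam ->
  exists2 K, 0 < K & forall x : vec, posv x -> (forall i, f x i <= lam * x i) ->
    forall j i, j \in C -> x j <= K * x i.
Proof.
move=> [[_ [C_connected _]] _] C_unique lam0.
have [K K0 HK] : exists2 K, 0 < K & forall p : 'I_n * 'I_n, p.2 \in C -> ratio_bound lam p.1 p.2 K.
  apply: exists_forall_finite_large => -[a j] /=.
  have [jC|jNC] := boolP (j \in C); last by exists 0.
  have [D /C_unique -> [c cC ac]] := exists_reachable_final_class a.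
  have [B HB] := connect_ratio_bound lam0 (connect_trans ac (C_connected c j cC jC)).
  by exists B => B' BB' _; apply: ratio_bound_le BB' HB.
exists K => // x px fle j i jC.
case: (@arg_minP _ _ _ i predT x isT) => a _ amin.
apply: le_trans (HK (a, j) jC x px (fun k => amin k isT) fle) _.
by rewrite ler_wpM2l ?(ltW K0) ?amin.
Qed.

End FinalClassBound.

Section MainArgument.
Variables (R : realType) (n : nat) (f : ('I_n -> R) -> ('I_n -> R)).
Notation vec := ('I_n -> R).
Hypothesis fpos : forall x, posv x -> posv (f x).
Hypothesis fop : order_preserving f.
Hypothesis fhom : homogeneous f.
Variable C : {set 'I_n}.
Hypothesis hC : final_class f C.
Hypothesis huniq : forall D : {set 'I_n}, final_class f D -> D = C.
Hypothesis hr : cw_radius (fJ0 f (~: C)) < cw_radius f.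

Local Notation rho := (cw_radius f).

Lemma rho_gt0 : 0 < rho.
Proof. exact: le_lt_trans (cw_radius_ge0 _) hr. Qed.

Lemma class_nonempty : exists i : 'I_n, i \in C.
Proof. by case: hC => -[/set0Pn [i iC] _] _; exists i. Qed.

Lemma exists_ratio_ge_rho (x : vec) : posv x -> exists i, rho * x i <= f x i.
Proof.
move=> px; apply/not_existsP => H.
suff : \big[Num.max/0]_(i < n) (f x i / x i) < rho.
  by rewrite ltNge cw_radius_le_max_ratio.
apply/bigmax_ltP; split=> [|i _]; first exact: rho_gt0.
by rewrite ltr_pdivrMr // ltNge; apply/negP; exact: H.
Qed.

Lemma exists_ratio_le_rho (x : vec) : posv x -> exists i, f x i <= rho * x i.
Proof.
move=> px; apply/not_existsP => H; have [i0 _] := class_nonempty.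
pose c := \big[Num.min/rho + 1]_(i < n) (f x i / x i).
have : c <= rho.
  apply: (le_cw_radius fop fhom i0 px) => i.
  by rewrite -ler_pdivlMr // bigmin_le.
rewrite leNgt => /negP; apply; apply/bigmin_gtP; split=> [|i _]; first by rewrite ltrDl.
by rewrite ltr_pdivlMr // ltNge; apply/negP; exact: H.
Qed.

Lemma eigval_eq_rho (x : vec) mu : posv x -> f x = (fun i => mu * x i) -> mu = rho.
Proof.
move=> px fx; apply/eqP; rewrite eq_le.
have [i Hi] := exists_ratio_le_rho px; have [j Hj] := exists_ratio_ge_rho px.
move: Hi Hj; rewrite fx => Hi Hj.
by rewrite -(ler_pM2r (px i)) Hi -(ler_pM2r (px j)) Hj.
Qed.

Lemma exists_off_class_strict_subeig : exists rho2 (y : vec), [/\ 0 < rho2, rho2 < rho, posv y &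
  forall j, j \notin C -> fext f (proj0 (~: C) y) j < rho2 * y j].
Proof.
pose g := fJ0 f (~: C); pose rho2 := (cw_radius g + rho) / 2.
have r2lt : rho2 < rho by rewrite /rho2 ltr_pdivrMr // mulrDr mulr1 ltrD2r.
have r2gt : cw_radius g < rho2 by rewrite /rho2 ltr_pdivlMr // mulrDr mulr1 ltrD2l.
have := r2gt; rewrite {1}/cw_radius => /inf_lt [|_ [y py <-] ylt].
  by exists (\big[Num.max/0]_(i < n) (g (fun=> 1) i / 1)), (fun=> 1) => // i.
exists rho2, y; split=> // [|j jNC]; first exact: le_lt_trans (cw_radius_ge0 _) r2gt.
have := le_lt_trans (le_bigmax _ _ j) ylt.
by rewrite ltr_pdivrMr // /g /fJ0 /proj0 inE jNC.
Qed.

Lemma off_class_decay : exists rho2 (y : vec) eta, [/\ 0 < rho2, rho2 < rho, posv y, 0 < eta &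
  forall t (x : vec), 0 < t -> posv x -> (forall j, j \in C -> x j <= eta * t) ->
    (forall j, j \notin C -> x j <= t * y j) ->
    forall j, j \notin C -> f x j < rho2 * (t * y j)].
Proof.
have [rho2 [y [r2pos r2lt py fext_lt]]] := exists_off_class_strict_subeig.
pose z := proj0 (~: C) y.
have z0 k : 0 <= z k by rewrite /z /proj0; case: ifP => // _; exact: ltW.
have pz e : 0 < e -> posv (fun k => z k + e) by move=> e0 k; exact: ltr_wpDl.
have [eta eta0 Heta] : exists2 eta, 0 < eta &
    forall j, j \notin C -> f (fun k => z k + eta) j < rho2 * y j.
  apply: exists_forall_finite_small => j.
  have [jC|jNC] := boolP (j \in C); first by exists 1.
  move: (fext_lt j jNC); rewrite /fext => /inf_lt [|_ [e e0 <-] fe].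
    by exists (f (fun k => z k + 1) j), 1 => //=; exact: ltr01.
  exists e => // e' e'0 e'e _; apply: le_lt_trans fe.
  by apply: fop; [exact: pz | exact: pz | move=> k; rewrite lerD2l].
exists rho2, y, eta; split => // t x t0 px xC xNC j jNC.
have le_x k : x k <= t * (z k + eta).
  rewrite /z /proj0 inE; case: ifP => kNC.
    by apply: le_trans (xNC k kNC) _; rewrite ler_wpM2l ?(ltW t0) // lerDl ltW.
  by rewrite add0r mulrC; apply: xC; move/negbFE: kNC.
apply: le_lt_trans (le_map_scale fop fhom px (pz _ eta0) t0 le_x j) _.
by rewrite mulrCA ltr_pM2l // Heta.
Qed.

(* Let k maximise x_k / y_k outside C.  Either some coordinate on C exceeds
   eta x_k / y_k and dominates all of x, or off_class_decay applies at k. *)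
Lemma off_class_dichotomy : exists rho2 th L, [/\ 0 < rho2, rho2 < rho, 0 < th, 0 < L &
  forall x : vec, posv x ->
    (exists2 c, c \in C & forall i, x i <= L * x c) \/
    (exists k, f x k < rho2 * x k /\ forall j, th * x j <= x k)].
Proof.
have [rho2 [y [eta [r2pos r2lt py eta0 decay]]]] := off_class_decay.
have [c0 c0C] := class_nonempty.
case: (@arg_maxP _ _ _ c0 predT y isT) => ka _ kamax.
case: (@arg_minP _ _ _ c0 predT y isT) => kb _ kbmin.
pose M := Num.max (y ka) eta; have M0 : 0 < M by rewrite lt_max eta0 orbT.
pose L := Num.max 1 (y ka / eta); have L1 : 1 <= L by rewrite le_max lexx.
exists rho2, (y kb / M), L; split=> //; [by rewrite divr_gt0 | exact: lt_le_trans ltr01 L1 |].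
move=> x px; case: (@arg_maxP _ _ _ c0 (fun i => i \in C) x c0C) => c cC cmax.
have x_le_c i : i \in C -> x i <= L * x c.
  by move=> iC; apply: le_trans (cmax i iC) _; rewrite ler_peMl // ltW.
case: (pickP (fun k => k \notin C)) => [k0 k0NC | allC]; last first.
  by left; exists c => // i; apply: x_le_c; move: (allC i) => /negbFE.
case: (@arg_maxP _ _ _ k0 (fun k => k \notin C) (fun k => x k / y k) k0NC) => k kNC kmax.
pose t := x k / y k; have t0 : 0 < t by rewrite divr_gt0.
have xNC j : j \notin C -> x j <= t * y j by move=> jNC; rewrite -ler_pdivrMr //; apply: kmax.
have [c_big|c_small] := ltP (eta * t) (x c).
  left; exists c => // i; have [iC|iNC] := boolP (i \in C); first exact: x_le_c.
  have t_le : t <= x c / eta by rewrite ler_pdivlMr // mulrC ltW.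
  apply: le_trans (xNC i iNC) _; apply: le_trans (_ : x c / eta * y ka <= _).
    by apply: ler_pM; [exact: ltW t0 | exact: ltW (py i) | exact: t_le | exact: kamax].
  have -> : x c / eta * y ka = y ka / eta * x c by ring.
  by rewrite ler_wpM2r ?(ltW (px c)) // /L le_max lexx orbT.
right; exists k; split.
  have xC j : j \in C -> x j <= eta * t by move=> jC; exact: le_trans (cmax j jC) c_small.
  by have := decay t x t0 px xC xNC k kNC; rewrite /t divfK ?gt_eqF.
move=> j; have x_le_Mt : x j <= M * t.
  have [jC|jNC] := boolP (j \in C).
    apply: le_trans (cmax j jC) _; apply: le_trans c_small _.
    by rewrite ler_wpM2r ?(ltW t0) // /M le_max lexx orbT.
  apply: le_trans (xNC j jNC) _; rewrite mulrC ler_wpM2r ?(ltW t0) // /M le_max.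
  by apply/orP; left; exact: kamax.
apply: le_trans (_ : y kb / M * (M * t) <= _).
  by rewrite ler_wpM2l // divr_ge0 // ltW.
rewrite mulrA divfK ?gt_eqF // -[x k](@divfK _ (y k)) ?gt_eqF // mulrC.
by rewrite ler_wpM2l ?(ltW t0) //; exact: kbmin.
Qed.

Lemma ratio_bounded_of_subeig : exists rho2 th, [/\ 0 < rho2, rho2 < rho, 0 < th &
  forall lam, 0 <= lam -> exists2 K, 0 < K & forall x : vec, posv x ->
    (forall i, f x i <= lam * x i) ->
    (forall k, f x k < rho2 * x k -> exists j, x k < th * x j) ->
    forall i j, x i <= K * x j].
Proof.
have [rho2 [th [L [r2pos r2lt th0 L0 dichotomy]]]] := off_class_dichotomy.
exists rho2, th; split=> // lam lam0.
have [K K0 HK] := final_class_ratio_bound fop fhom hC huniq lam0.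
exists (L * K) => [|x px fle small_coords i j]; first by rewrite mulr_gt0.
case: (dichotomy x px) => [[c cC xc] | [k [fk k_big]]].
  by apply: le_trans (xc i) _; rewrite -mulrA ler_wpM2l ?(ltW L0) // HK.
have [j' kj'] := small_coords k fk.
by move: (k_big j'); rewrite leNgt kj'.
Qed.

Lemma twisted_eigvec_straddles_one (kap : R) (x : vec) : posv x ->
  (forall i, f x i = rho * x i * expR (kap * ln (x i))) -> 0 < kap ->
  (exists i, 1 <= x i) /\ (exists i, x i <= 1).
Proof.
move=> px fx kap0; have r0 := rho_gt0; split.
  have [i ge_i] := exists_ratio_ge_rho px; exists i; move: ge_i.
  rewrite fx ler_pMr ?mulr_gt0 // -expR0 ler_expR pmulr_rge0 // => ln_ge0.
  by rewrite -[x i]lnK ?posrE // ler_expR.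
have [i le_i] := exists_ratio_le_rho px; exists i; move: le_i.
rewrite fx ger_pMr ?mulr_gt0 // -expR0 ler_expR pmulr_rle0 // => ln_le0.
by rewrite -[x i]lnK ?posrE // ler_expR.
Qed.

Lemma twisted_eigvec_small_coords (kap rho2 th : R) (x : vec) :
  posv x -> 0 < kap -> 0 < rho2 -> 0 < th ->
  (forall i, f x i = rho * x i * expR (kap * ln (x i))) ->
  kap * `|ln th| <= - ln (rho2 / rho) ->
  forall k, f x k < rho2 * x k -> exists j, x k < th * x j.
Proof.
move=> px kap0 r2pos th0 fx kapth k fk_small; have r0 := rho_gt0.
have [[i1 xi1] _] := twisted_eigvec_straddles_one px fx kap0.
have : expR (kap * ln (x k)) < rho2 / rho.
  by rewrite ltr_pdivlMr // mulrC -(ltr_pM2r (px k)) mulrAC -fx.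
rewrite -[rho2 / rho]lnK ?posrE ?divr_gt0 // ltr_expR => kap_ln_small.
exists i1; apply: lt_le_trans (_ : th <= _); last by rewrite ler_pMr.
rewrite -[th]lnK ?posrE // -[x k]lnK ?posrE // ltr_expR -(ltr_pM2l kap0).
apply: lt_le_trans kap_ln_small _; apply: le_trans (_ : - (kap * `|ln th|) <= _).
  by rewrite lerNr.
rewrite -mulrN; apply: (ler_wpM2l (ltW kap0)).
by rewrite lerNl -normrN ler_norm.
Qed.

Lemma exists_approx_eigvec : exists2 K, 0 < K & forall beta, 1 < beta ->
  exists2 x, in_box K x & forall i, rho / beta * x i <= f x i <= rho * beta * x i.
Proof.
have r0 := rho_gt0.
pose c0 := \big[Num.max/0]_(i < n) `|ln (f (fun=> 1) i) - ln rho|.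
have c00 : 0 <= c0 by rewrite /c0 bigmax_idl le_max lexx.
have [rho2 [th [r2pos r2lt th0 bounded]]] := ratio_bounded_of_subeig.
have [K K0 HK] := bounded (rho * expR c0) (mulr_ge0 (ltW r0) (expR_ge0 _)).
exists K => // beta beta1; have b0 : 0 < beta := lt_trans ltr01 beta1.
have [kap kap0 kap_small] : exists2 kap, 0 < kap & forall p : bool,
    kap * `|ln (if p then K else th)| <= if p then ln beta else - ln (rho2 / rho).
  apply: exists_forall_finite_small => -[]; apply: exists_small_mul_norm_le.
    by rewrite ln_gt0.
  by rewrite oppr_gt0 ln_lt0 // divr_gt0 //= ltr_pdivrMr // mul1r.
have [|x [px fx kap_ln]] := exists_twisted_eigvec fpos fop fhom r0 kap0 c00.
  by move=> i; exact: le_bigmax.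
have [[i1 xi1] [i2 xi2]] := twisted_eigvec_straddles_one px fx kap0.
have fle i : f x i <= rho * expR c0 * x i.
  rewrite fx mulrAC ler_wpM2r ?(ltW (px i)) // ler_wpM2l ?(ltW r0) // ler_expR.
  by have := kap_ln i; rewrite ler_norml => /andP [].
have x_ratio := HK x px fle (twisted_eigvec_small_coords px kap0 r2pos th0 fx (kap_small false)).
have bx : in_box K x.
  move=> i; apply/andP; split; last exact: le_trans (x_ratio i i2) (ler_piMr (ltW K0) xi2).
  by rewrite -(ler_pM2l K0) mulfV ?gt_eqF //; apply: le_trans xi1 (x_ratio i1 i).
exists x => // i; have := expR_scaled_ln_in_box i K0 b0 bx (ltW kap0) (kap_small true).
by case/andP=> lo hi; rewrite fx [rho * x i * _]mulrAC !ler_pM2r // !ler_pM2l // lo hi.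
Qed.

Lemma exists_eigvec : exists x, posv x /\ f x = (fun i => rho * x i).
Proof.
have r0 := rho_gt0; have [K K0 approx] := exists_approx_eigvec.
have [X bX Xsub] : exists2 X, in_box K X & forall i, rho * X i <= f X i.
  apply: (exists_subeig_in_box fpos fop fhom r0 K0) => b b1.
  by have [x bx H] := approx b b1; exists x => // i; case/andP: (H i).
have [Y bY Ysup] : exists2 Y, in_box K Y & forall i, f Y i <= rho * Y i.
  apply: (exists_supereig_in_box fpos fop fhom r0 K0) => b b1.
  by have [x bx H] := approx b b1; exists x => // i; case/andP: (H i).
have KK0 : 0 < K * K by rewrite mulr_gt0.
have pY := in_box_posv K0 bY.
apply: (exists_eigvec_between (Y := fun i => K * K * Y i) fop r0 (in_box_posv K0 bX)) => // i.
  case/andP: (bX i) => _ XK; case/andP: (bY i) => YK _; apply: le_trans XK _.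
  by rewrite -mulrA ler_pMr ?mulr_gt0 // -(mulfV (lt0r_neq0 K0)) ler_pM2l.
by rewrite (fhom KK0 pY) mulrCA ler_pM2l.
Qed.

Lemma eigset_ratio_bounded : exists2 K, 0 < K &
  forall x : vec, eigset f x -> forall i j, x i <= K * x j.
Proof.
have [rho2 [th [_ r2lt _ bounded]]] := ratio_bounded_of_subeig.
have [K K0 HK] := bounded rho (ltW rho_gt0).
exists K => // x [px [mu fx]]; have mu_rho := eigval_eq_rho px fx.
rewrite {}mu_rho in fx.
apply: HK => // [i|k]; first by rewrite fx.
by rewrite fx ltr_pM2r // => /(lt_trans r2lt); rewrite ltxx.
Qed.

End MainArgument.

Theorem theorem3p11 (R : realType) (n : nat) (f : ('I_n -> R) -> ('I_n -> R))
  (fpos : forall x, posv x -> posv (f x))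
  (fop : order_preserving f) (fhom : homogeneous f)
  (C : {set 'I_n}) (hC : final_class f C)
  (huniq : forall D : {set 'I_n}, final_class f D -> D = C)
  (hr : cw_radius (fJ0 f (~: C)) < cw_radius f) :
  (exists x, eigset f x) /\
  (exists M : R, forall x y, eigset f x -> eigset f y -> hilbert_dist x y <= M).
Proof.
split.
  have [x [px fx]] := exists_eigvec fpos fop fhom hC huniq hr.
  by exists x; split=> //; exists (cw_radius f).
have [K K0 HK] := eigset_ratio_bounded fop fhom hC huniq hr.
exists (ln (Num.max 1 (K * K))) => x y ex ey.
by apply: hilbert_dist_le K0 (proj1 ex) (proj1 ey) (HK x ex) (HK y ey).
Qed.
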